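(* Let $r\geq 2$ and $d\geq 2$ be integers, let $\mathbf a=(a_1,\ldots,a_r)$ be a sequence of positive integers, and let $D(d)=\operatorname{lcm}(da_1,\ldots,da_r)$. For an integer $n\geq 0$ let $\mathbf p_{\mathbf a,d}(n)$ denote the number of integer tuples $(x_1,\ldots,x_r)$ with $\sum_{i=1}^r a_ix_i=n$, $x_i\geq 0$ and $x_i\equiv 0$ or $x_i\equiv 1\pmod d$ for all $i$. Then for all $n\geq 0$, $$\mathbf p_{\mathbf a,d}(n)=\frac{1}{(r-1)!}\sum_{\varepsilon\in\{0,1\}^r}\ \sum_{\substack{0\leq j_i\leq \frac{D(d)}{da_i}-1,\ 1\leq i\leq r\\ \sum_{i=1}^r a_i(dj_i+\varepsilon_i)\equiv n \pmod{D(d)}}}\ \prod_{\ell=1}^{r-1}\left(\frac{n-\sum_{i=1}^r a_i(dj_i+\varepsilon_i)}{D(d)}+\ell\right),$$ where $\varepsilon=(\varepsilon_1,\ldots,\varepsilon_r)$. Moreover, the polynomial part of $\mathbf p_{\mathbf a,d}$ is $$P_{\mathbf a,d}(n)=\frac{1}{D(d)(r-1)!}\sum_{\substack{\varepsilon\in\{0,1\}^r\\ 0\leq j_i\leq \frac{D(d)}{da_i}-1,\ 1\leq i\leq r}}\ \prod_{\ell=1}^{r-1}\left(\frac{n-\sum_{i=1}^r a_i(dj_i+\varepsilon_i)}{D(d)}+\ell\right).$$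
   Context: The polynomial part $P_{\mathbf a,d}(n)$ of $\mathbf p_{\mathbf a,d}$ is the polynomial in $n$ given by the coefficient of $t^{-1}$ in the Laurent expansion at $t=0$ of $e^{nt}\prod_{i=1}^r\dfrac{1+e^{-a_it}}{1-e^{-da_it}}$ (equivalently, the sum over $J\subseteq\{1,\ldots,r\}$ of Sylvester's first waves $P_{d\mathbf a}(n-\sum_{i\in J}a_i)$ of the restricted partition function with parts $da_1,\ldots,da_r$). *)

From mathcomp Require Import all_boot all_order all_algebra.
Set Implicit Arguments. Unset Strict Implicit. Unset Printing Implicit Defensive.
Import Order.TTheory GRing.Theory Num.Theory.
Local Open Scope ring_scope.

Definition Dlcm (r : nat) (a : 'I_r -> nat) (d : nat) : nat :=
  \big[lcmn/1%N]_(i < r) (d * a i)%N.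

(* Since a_i >= 1, each x_i <= n, so we range over
   {ffun 'I_r -> 'I_(n.+1)} (the bound is automatic when all a_i > 0). *)
Definition pad (r : nat) (a : 'I_r -> nat) (d n : nat) : nat :=
  #|[set x : {ffun 'I_r -> 'I_(n.+1)} |
      ((\sum_(i < r) a i * x i)%N == n) &&
      [forall i, ((x i %% d)%N == 0%N) || ((x i %% d)%N == 1%N)]]|.

Definition ps := nat -> rat.

Definition ps_mul (f g : ps) : ps := fun k => \sum_(i < k.+1) f i * g (k - i)%N.

Definition ps_one : ps := fun k => (k == 0%N)%:R.

(* coefficients g_0..g_k of the multiplicative inverse of f (f 0 != 0) *)
Fixpoint ps_inv_aux (f : ps) (k : nat) : seq rat :=
  match k with
  | 0 => [:: (f 0%N)^-1]
  | k'.+1 => let s := ps_inv_aux f k' in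
             rcons s (- (f 0%N)^-1 * \sum_(i < k'.+1) f (k'.+1 - i)%N * nth 0 s i)
  end.
Definition ps_inv (f : ps) : ps := fun k => nth 0 (ps_inv_aux f k) k.

Definition ps_exp (c : rat) : ps := fun k => c ^+ k / (k`!)%:R.

Definition ps_num (c : rat) : ps := fun k => ps_one k + ps_exp (- c) k.

(* (1 - e^{-c t}) / t  (a genuine power series with constant term c) *)
Definition ps_den (c : rat) : ps := fun k => - ps_exp (- c) k.+1.

(* The polynomial part P_{a,d}(n): coefficient of t^{-1} in the Laurent
   expansion at 0 of  e^{nt} prod_i (1 + e^{-a_i t}) / (1 - e^{-d a_i t})
   = t^{-r} * [ e^{nt} prod_i (1 + e^{-a_i t}) * (prod_i (1-e^{-d a_i t})/t)^{-1} ],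
   i.e. the coefficient of t^{r-1} of the bracketed power series. *)
Definition polypart (r : nat) (a : 'I_r -> nat) (d : nat) (n : rat) : rat :=
  ps_mul (ps_exp n)
    (ps_mul (\big[ps_mul/ps_one]_(i < r) ps_num (a i)%:R)
            (ps_inv (\big[ps_mul/ps_one]_(i < r) ps_den (d * a i)%N%:R)))
    r.-1.

(* Both formulas are read off power series in t.  If h maps (nat, +) to the
   multiplicative monoid of a commutative ring and D = d a m, then
     (1 + h(a)) (1 - h(D)) = (1 - h(d a)) * sum_(e in {0,1}, j < m) h(a (d j + e)),
   and multiplying these identities for a = a_1, ..., a_r gives a sum of h(S) over
   (eps, j), with S = sum_i a_i (d j_i + eps_i).
   With h(x) = t^x, the generating function prod_i (1 + t^(a_i)) / (1 - t^(d a_i)) of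
   p_(a,d) becomes sum_(eps,j) t^S / (1 - t^D)^r, whose n-th coefficient is a sum of
   binomials C((n - S)/D + r - 1, r - 1), i.e. of rising factorials divided by (r-1)!.
   The terms with S > n and S = n (mod D) may be added for free: S < r D, so one factor
   of their rising factorial vanishes.
   With h(x) = e^(-x t), the same identity turns the Laurent series defining the
   polynomial part into sum_(eps,j) e^((n - S) t) (t / (1 - e^(-D t)))^r, and the
   coefficient of t^k in e^(c t) (t / (1 - e^(-D t)))^(k+1) is
   prod_(l=1..k) (c/D + l) / (D k!), by a first-order recursion in k obtained from the
   Euler operator t d/dt. *)

From HB Require Import structures.
From mathcomp Require Import all_boot all_order all_algebra.
From mathcomp Require Import boolp ring zify.
Set Implicit Arguments. Unset Strict Implicit. Unset Printing Implicit Defensive.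
Import Order.TTheory GRing.Theory Num.Theory.
Local Open Scope ring_scope.

(** * The ring of formal power series over [rat] *)

HB.instance Definition _ := Choice.on ps.

Definition ps_add (f g : ps) : ps := fun k => f k + g k.
Definition ps_opp (f : ps) : ps := fun k => - f k.

Lemma ps_addA : associative ps_add.
Proof. by move=> f g h; apply: funext => k; rewrite /ps_add addrA. Qed.

Lemma ps_addC : commutative ps_add.
Proof. by move=> f g; apply: funext => k; rewrite /ps_add addrC. Qed.

Lemma ps_add0 : left_id (fun _ => 0) ps_add.
Proof. by move=> f; apply: funext => k; rewrite /ps_add add0r. Qed.

Lemma ps_addN : left_inverse (fun _ => 0) ps_opp ps_add.
Proof. by move=> f; apply: funext => k; rewrite /ps_add addNr. Qed.

HB.instance Definition _ := GRing.isZmodule.Build ps ps_addA ps_addC ps_add0 ps_addN.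

(* [ps_mul] inherits associativity and commutativity from [{poly rat}] through
   truncation. *)
Definition ps_trunc (m : nat) (f : ps) : {poly rat} := \poly_(i < m.+1) f i.

Lemma ps_mul_trunc m (f g : ps) k :
  (k <= m)%N -> ps_mul f g k = (ps_trunc m f * ps_trunc m g)`_k.
Proof.
move=> le_km; rewrite coefM; apply: eq_bigr => i _.
have le_ik : (i <= k)%N by rewrite -ltnS.
by rewrite !coef_poly !ltnS (leq_trans le_ik le_km) (leq_trans (leq_subr _ _) le_km).
Qed.

Lemma ps_mulA : associative ps_mul.
Proof.
move=> f g h; apply: funext => k.
have trunc_mul (u v : ps) (p : {poly rat}) :
    (ps_trunc k (ps_mul u v) * p)`_k = (ps_trunc k u * ps_trunc k v * p)`_k.
  rewrite !coefM; apply: eq_bigr => i _; congr (_ * _).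
  have le_ik : (i <= k)%N by rewrite -ltnS.
  by rewrite coef_poly ltnS le_ik (ps_mul_trunc _ _ le_ik).
rewrite !(ps_mul_trunc _ _ (leqnn k)) [ps_trunc k f * _]mulrC.
by rewrite !trunc_mul mulrC mulrA.
Qed.

Lemma ps_mulC : commutative ps_mul.
Proof.
by move=> f g; apply: funext => k; rewrite !(ps_mul_trunc _ _ (leqnn k)) mulrC.
Qed.

Lemma ps_mul1 : left_id ps_one ps_mul.
Proof.
move=> f; apply: funext => k; rewrite /ps_mul big_ord_recl /= mul1r subn0.
by rewrite big1 ?addr0 // => i _; rewrite mul0r.
Qed.

Lemma ps_mulDl : left_distributive ps_mul +%R.
Proof.
move=> f g h; apply: funext => k.
rewrite /ps_mul [RHS]/+%R /= /ps_add -big_split /=.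
by apply: eq_bigr => i _; apply: mulrDl.
Qed.

Lemma ps_one_neq0 : ps_one != 0.
Proof. by apply/eqP => /(congr1 (fun f : ps => f 0%N))/eqP; rewrite oner_eq0. Qed.

HB.instance Definition _ := GRing.Zmodule_isComNzRing.Build ps
  ps_mulA ps_mulC ps_mul1 ps_mulDl ps_one_neq0.

Lemma ps_mulE (f g : ps) : f * g = ps_mul f g. Proof. by []. Qed.

Lemma ps_coefD (f g : ps) k : (f + g) k = f k + g k. Proof. by []. Qed.

Lemma ps_coefN (f : ps) k : (- f) k = - f k. Proof. by []. Qed.

Lemma ps_coefMn (f : ps) n k : (f *+ n) k = f k *+ n.
Proof. by elim: n => [|n IH]; rewrite ?mulr0n // !mulrS ps_coefD IH. Qed.

Lemma ps_coef_sum (I : Type) (s : seq I) (P : pred I) (F : I -> ps) k :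
  (\sum_(i <- s | P i) F i) k = \sum_(i <- s | P i) F i k.
Proof. by elim/big_rec2: _ => // i y1 y2 _ <-. Qed.

Lemma ps_coef0M (f g : ps) : (f * g) 0%N = f 0%N * g 0%N.
Proof. by rewrite ps_mulE /ps_mul big_ord_recl big_ord0 addr0 subn0. Qed.

Lemma ps_coef0_prod (I : Type) (s : seq I) (P : pred I) (F : I -> ps) :
  (\prod_(i <- s | P i) F i) 0%N = \prod_(i <- s | P i) F i 0%N.
Proof. by elim/big_rec2: _ => // i y1 y2 _ <-; rewrite ps_coef0M. Qed.

Definition ps_agree (n : nat) (f g : ps) := forall k, (k <= n)%N -> f k = g k.

Lemma ps_agreeM n (f f' g g' : ps) :
  ps_agree n f f' -> ps_agree n g g' -> ps_agree n (f * g) (f' * g').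
Proof.
move=> ff' gg' k le_kn; apply: eq_bigr => i _.
have le_ik : (i <= k)%N by rewrite -ltnS.
by rewrite ff' ?gg' ?(leq_trans le_ik le_kn) ?(leq_trans (leq_subr i k) le_kn).
Qed.

Lemma ps_agree_prod n (I : Type) (s : seq I) (F G : I -> ps) :
  (forall i, ps_agree n (F i) (G i)) ->
  ps_agree n (\prod_(i <- s) F i) (\prod_(i <- s) G i).
Proof. by move=> FG; elim/big_rec2: _ => [//|i y1 y2 _]; apply: ps_agreeM. Qed.

Definition psC (c : rat) : ps := fun k => if k is 0 then c else 0.

Lemma ps_coefCM c (f : ps) k : (psC c * f) k = c * f k.
Proof.
rewrite ps_mulE /ps_mul big_ord_recl subn0 big1 ?addr0 // => i _.
by rewrite mul0r.
Qed.

Definition psXn (m : nat) : ps := fun k => (k == m)%:R.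

Definition psX : ps := psXn 1.

Lemma ps_coefXnM m (f : ps) k :
  (psXn m * f) k = if (m <= k)%N then f (k - m)%N else 0.
Proof.
rewrite mulrC ps_mulE /ps_mul.
rewrite (eq_bigr (fun i : 'I_k.+1 => if (k - i == m)%N then f i else 0)); last first.
  by move=> i _; rewrite /psXn; case: eqP; rewrite ?mulr1 ?mulr0.
rewrite -big_mkcond /=; case: leqP => [le_mk | lt_km].
  have lt_km1 : (k - m < k.+1)%N by rewrite ltnS leq_subr.
  rewrite (big_pred1 (Ordinal lt_km1)) // => i /=.
  apply/eqP/eqP => [kim | -> /=]; last by rewrite subKn.
  by apply: val_inj; rewrite /= -kim subKn // -ltnS.
by rewrite big_pred0 // => i; apply/eqP; lia.
Qed.

Lemma psXnD m p : psXn (m + p) = psXn m * psXn p.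
Proof.
apply: funext => k; rewrite ps_coefXnM /psXn.
case: leqP => le_mk; last by rewrite (_ : (k == m + p)%N = false) //; lia.
by rewrite (_ : (k == m + p)%N = (k - m == p)%N) //; apply/eqP/eqP; lia.
Qed.

Lemma psXn0 : psXn 0 = 1. Proof. by []. Qed.

Lemma psXn_lreg m : GRing.lreg (psXn m).
Proof.
move=> f g /(congr1 (fun h : ps => h (_ + m)%N)) fg; apply: funext => k.
by have := fg k; rewrite !ps_coefXnM leq_addl addnK.
Qed.

Lemma size_ps_inv_aux (f : ps) k : size (ps_inv_aux f k) = k.+1.
Proof. by elim: k => [|k IH] //=; rewrite size_rcons IH. Qed.

Lemma nth_ps_inv_aux (f : ps) k i :
  (i <= k)%N -> nth 0 (ps_inv_aux f k) i = ps_inv f i.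
Proof.
elim: k => [|k IH]; first by rewrite leqn0 => /eqP ->.
rewrite leq_eqVlt => /predU1P [-> //|]; rewrite ltnS => lt_ik.
by rewrite /= nth_rcons size_ps_inv_aux ltnS lt_ik IH.
Qed.

Lemma ps_invS (f : ps) k :
  ps_inv f k.+1 = - (f 0%N)^-1 * \sum_(i < k.+1) f (k.+1 - i)%N * ps_inv f i.
Proof.
rewrite /ps_inv /= nth_rcons size_ps_inv_aux ltnn eqxx; congr (_ * _).
by apply: eq_bigr => i _; rewrite nth_ps_inv_aux // -ltnS.
Qed.

Lemma ps_mulV (f : ps) : f 0%N != 0 -> f * ps_inv f = 1.
Proof.
move=> f0_neq0; apply: funext => -[|k]; first by rewrite ps_coef0M mulfV.
rewrite ps_mulE ps_mulC /ps_mul big_ord_recr /= subnn ps_invS mulrAC mulNr.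
by rewrite mulVf // mulN1r (eq_bigr _ (fun i _ => mulrC _ _)) subrr.
Qed.

Definition euler (f : ps) : ps := fun k => k%:R * f k.

Lemma eulerM (f g : ps) : euler (f * g) = euler f * g + f * euler g.
Proof.
apply: funext => k; rewrite ps_coefD !ps_mulE /ps_mul /euler mulr_sumr -big_split.
apply: eq_bigr => i _ /=.
have le_ik : (i <= k)%N by rewrite -ltnS.
by rewrite -{1}(subnKC le_ik) natrD; ring.
Qed.

Lemma euler1 : euler 1 = 0.
Proof. by apply: funext => -[|k]; rewrite /euler ?mul0r ?mulr0. Qed.

Lemma eulerX (f : ps) n : euler (f ^+ n.+1) = (f ^+ n * euler f) *+ n.+1.
Proof.
elim: n => [|n IH]; first by rewrite expr1 expr0 mul1r.
by rewrite exprS eulerM IH mulrnAr mulrA -exprS [in RHS]mulrS mulrC.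
Qed.

Lemma euler_inv (f g : ps) : f * g = 1 -> euler g = - (g ^+ 2 * euler f).
Proof.
move=> fg; have := eulerM f g; rewrite fg euler1 => /esym/eqP.
rewrite addrC addr_eq0 => /eqP fdg.
by rewrite -[euler g]mul1r -fg mulrAC fdg; ring.
Qed.

(** * Exponential series *)

Lemma fact_neq0 n : (n`!)%:R != 0 :> rat.
Proof. by rewrite pnatr_eq0 -lt0n fact_gt0. Qed.

Lemma ps_expD b c : ps_exp b * ps_exp c = ps_exp (b + c).
Proof.
apply: funext => k; rewrite ps_mulE /ps_mul /ps_exp addrC exprDn mulr_suml.
apply: eq_bigr => i _; have le_ik : (i <= k)%N by rewrite -ltnS.
have bin_neq0 : 'C(k, i)%:R != 0 :> rat by rewrite pnatr_eq0 -lt0n bin_gt0.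
rewrite -(bin_fact le_ik) !natrM -mulr_natr.
by field; rewrite bin_neq0 !fact_neq0.
Qed.

Lemma ps_exp0 : ps_exp 0 = 1.
Proof.
apply: funext => -[|k]; rewrite /ps_exp /= ?expr0 ?fact0 ?divr1 //.
by rewrite expr0n mul0r.
Qed.

Lemma ps_expN_morph :
  {morph (fun x : nat => ps_exp (- x%:R)) : x y / (x + y)%N >-> x * y}.
Proof. by move=> x y; rewrite /= ps_expD natrD opprD. Qed.

Lemma ps_expN0 : ps_exp (- 0%:R) = 1.
Proof. by rewrite oppr0 ps_exp0. Qed.

Lemma euler_exp c : euler (ps_exp c) = psC c * (psX * ps_exp c).
Proof.
apply: funext => -[|k]; rewrite ps_coefCM ps_coefXnM /= /euler ?mul0r ?mulr0 //.
rewrite subn1 /ps_exp factS natrM exprS.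
by field; rewrite fact_neq0 nat1r pnatr_eq0.
Qed.

Lemma ps_den0 c : ps_den c 0%N = c.
Proof. by rewrite /ps_den /ps_exp expr1 divr1 opprK. Qed.

Lemma psX_mul_den c : psX * ps_den c = 1 - ps_exp (- c).
Proof.
apply: funext => -[|k]; rewrite ps_coefXnM ps_coefD ps_coefN /=.
  by rewrite /ps_exp expr0 fact0 divr1 subrr.
by rewrite subn1 /ps_den add0r.
Qed.

Lemma euler_den c : euler (ps_den c) = psC c * ps_exp (- c) - ps_den c.
Proof.
apply: funext => k; rewrite ps_coefD ps_coefN ps_coefCM /euler /ps_den /ps_exp.
rewrite factS natrM exprS.
by field; rewrite fact_neq0 nat1r pnatr_eq0.
Qed.

Section ExpMulInvDen.
Variables (c D : rat).
Hypothesis D_neq0 : D != 0.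

Let g := ps_inv (ps_den D).
Let F (s : nat) := ps_exp c * g ^+ s.

Lemma ps_den_mulV : ps_den D * g = 1.
Proof. by apply: ps_mulV; rewrite ps_den0. Qed.

Lemma euler_inv_den : euler g = psC D * (psX * g) + g - psC D * g ^+ 2.
Proof.
have expND : ps_exp (- D) = 1 - psX * ps_den D.
  by rewrite psX_mul_den opprB addrC subrK.
rewrite (euler_inv ps_den_mulV) euler_den expND.
apply/eqP; rewrite -subr_eq0; apply/eqP.
transitivity ((psC D * (psX * g) + g) * (ps_den D * g - 1)); first by ring.
by rewrite ps_den_mulV subrr mulr0.
Qed.

Lemma euler_exp_mul_inv_den s :
  euler (F s.+1) =
  psC c * (psX * F s.+1) + (psC D * (psX * F s.+1) + F s.+1 - psC D * F s.+2) *+ s.+1.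
Proof. by rewrite /F eulerM euler_exp eulerX euler_inv_den !exprS; ring. Qed.

Lemma exp_mul_inv_den_coef_rec s :
  s.+1%:R * D * F s.+2 s.+1 = (c + s.+1%:R * D) * F s.+1 s.
Proof.
have := congr1 (fun f : ps => f s.+1) (euler_exp_mul_inv_den s).
rewrite /euler ps_coefD ps_coefMn !ps_coefD ps_coefN !ps_coefCM !ps_coefXnM subn1 /=.
move=> euler_coef; apply/eqP; rewrite -subr_eq0; apply/eqP.
transitivity (s.+1%:R * F s.+1 s.+1 -
  (c * F s.+1 s + (D * F s.+1 s + F s.+1 s.+1 - D * F s.+2 s.+1) *+ s.+1)).
  by ring.
by rewrite -euler_coef subrr.
Qed.

Lemma exp_mul_inv_den_coef k :
  F k.+1 k = (D * k`!%:R)^-1 * \prod_(1 <= l < k.+1) (c / D + l%:R).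
Proof.
elim: k => [|k IH].
  rewrite big_geq // /F expr1 ps_coef0M /ps_exp expr0 fact0 !divr1 mul1r.
  by rewrite /g /ps_inv /= ps_den0.
have -> : F k.+2 k.+1 = (c + k.+1%:R * D) * F k.+1 k / (k.+1%:R * D).
  by rewrite -exp_mul_inv_den_coef_rec; field; rewrite D_neq0 nat1r pnatr_eq0.
rewrite IH factS natrM [in RHS]big_nat_recr //=.
by field; rewrite D_neq0 fact_neq0 nat1r pnatr_eq0.
Qed.

End ExpMulInvDen.

(** * The factorisation identity *)

Lemma mulr_cross_inv (R : comPzRingType) (N T u v u' v' : R) :
  u * u' = 1 -> v * v' = 1 -> N * u = v * T -> N * v' = T * u'.
Proof.
move=> uu' vv' NT.
by rewrite -[N * v']mulr1 -uu' mulrACA NT mulrACA vv' mul1r.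
Qed.

Definition weight (r d : nat) (a : 'I_r -> nat)
    (eps : {ffun 'I_r -> bool}) (j : {ffun 'I_r -> 'I_(Dlcm a d)}) : nat :=
  \sum_(i < r) a i * (d * j i + eps i).

Lemma dvdn_Dlcm r (a : 'I_r -> nat) d i : (d * a i %| Dlcm a d)%N.
Proof. exact: biglcmn_sup. Qed.

Section AdditiveToMultiplicative.
Variables (R : comPzRingType) (h : nat -> R).
Hypotheses (hD : {morph h : x y / (x + y)%N >-> x * y}) (h0 : h 0%N = 1).

Lemma morph_mulnr k x : h (k * x) = h x ^+ k.
Proof. by elim: k => [|k IH]; rewrite ?mul0n ?h0 // mulSn hD IH exprS. Qed.

Lemma morph_sumn (I : Type) (s : seq I) (P : pred I) (F : I -> nat) :
  h (\sum_(i <- s | P i) F i) = \prod_(i <- s | P i) h (F i).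
Proof. exact: big_morph. Qed.

Lemma geometric_factor a d m :
  (1 + h a) * (1 - h (d * a * m)) =
  (1 - h (d * a)) * \sum_(e : bool) \sum_(j < m) h (a * (d * j + e)).
Proof.
have digit e j : h (a * (d * j + e)) = h (a * e) * h (d * a) ^+ j.
  by rewrite -morph_mulnr -hD; congr h; ring.
rewrite big_bool /= (eq_bigr _ (fun (j : 'I_m) _ => digit true j)).
rewrite (eq_bigr _ (fun (j : 'I_m) _ => digit false j)) -!mulr_sumr muln0 muln1 h0.
rewrite -mulrDl mulrCA -[1 - h (d * a)]opprB mulNr -subrX1 opprB.
by rewrite -morph_mulnr mulnC addrC.
Qed.

Section Weights.
Variables (r d : nat) (a : 'I_r -> nat).
Let D := Dlcm a d.

Lemma prod_geometric_factor :
  \prod_(i < r) ((1 + h (a i)) * (1 - h D)) =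
  \prod_(i < r) (1 - h (d * a i)) *
  \sum_(eps : {ffun 'I_r -> bool})
    \sum_(j : {ffun 'I_r -> 'I_D} | [forall i, (j i < D %/ (d * a i))%N])
      h (weight eps j).
Proof.
have factor i : (1 + h (a i)) * (1 - h D) = (1 - h (d * a i)) *
    \sum_(e : bool) \sum_(j < D | (j < D %/ (d * a i))%N) h (a i * (d * j + e)).
  rewrite {1}/D -{1}(divnK (dvdn_Dlcm a d i)) mulnC geometric_factor.
  congr (_ * _); apply: eq_bigr => e _.
  exact: (big_ord_widen D (fun j => h (a i * (d * j + e))) (leq_div D _)).
rewrite (eq_bigr _ (fun i _ => factor i)) big_split /= bigA_distr_bigA /=.
congr (_ * _); apply: eq_bigr => eps _.
rewrite bigA_distr_big_dep /=; apply: eq_big => [j | j _]; first by [].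
by rewrite morph_sumn.
Qed.

End Weights.
End AdditiveToMultiplicative.

(** * Coefficients of the counting series *)

Definition ps_geom (c : nat) : ps := fun k => (c %| k)%:R.

Lemma ps_geomK c : (0 < c)%N -> ps_geom c * (1 - psXn c) = 1.
Proof.
move=> c_gt0; apply: funext => k.
rewrite mulrBr mulr1 ps_coefD ps_coefN mulrC ps_coefXnM /ps_geom.
case: leqP => [le_ck | lt_kc].
  rewrite -{1}(subnK le_ck) dvdn_addl // subrr.
  by case: k le_ck => [|k] //; rewrite leqn0 => /eqP c0; rewrite c0 in c_gt0.
rewrite subr0; case: k lt_kc => [|k] lt_kc; first by rewrite dvdn0.
by rewrite gtnNdvd.
Qed.

Lemma ps_geom_exp_coef c k m : (0 < c)%N ->
  (ps_geom c ^+ k.+1) m = (c %| m)%:R * 'C(m %/ c + k, k)%:R.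
Proof.
move=> c_gt0.
pose B i : ps := fun m => (c %| m)%:R * 'C(m %/ c + i, i)%:R.
have B_rec i : B i.+1 * (1 - psXn c) = B i.
  apply: funext => {}m; rewrite mulrBr mulr1 ps_coefD ps_coefN mulrC ps_coefXnM /B.
  have [dvd_cm | ndvd_cm] := boolP (c %| m)%N; last first.
    rewrite !mul0r; case: leqP => // le_cm.
    by rewrite -(dvdn_addl _ (dvdnn c)) subnK // (negbTE ndvd_cm) mul0r subr0.
  case/dvdnP: dvd_cm => q ->; rewrite mulnK //.
  case: q => [|q]; first by rewrite mul0n leqNgt c_gt0 subr0 !add0n !binn.
  rewrite mulSn leq_addr addKn dvdn_mull // mulnK // addSn binS natrD addSnnS.
  by ring.
suff -> : ps_geom c ^+ k.+1 = B k by [].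
elim: k => [|k IH]; first by apply: funext => m'; rewrite expr1 /B addn0 bin0 mulr1.
by rewrite exprSr IH -(B_rec k) -mulrA [_ * ps_geom c]mulrC ps_geomK // mulr1.
Qed.

Lemma bin_fact_rising q k : ('C(q + k, k) * k`! = \prod_(1 <= l < k.+1) (q + l))%N.
Proof.
elim: k => [|k IH]; first by rewrite addn0 bin0 big_geq.
rewrite big_nat_recr //= -IH factS mulnCA mulnA -mul_bin_diag addnS /=.
by rewrite -mulnA mulnC.
Qed.

Lemma psXn_geom_exp_coef S D k n : (0 < D)%N -> (0 < k)%N -> (S < k * D)%N ->
  (psXn S * ps_geom D ^+ k) n = k.-1`!%:R^-1 *
    (if S == n %[mod D] then \prod_(1 <= l < k) ((n%:R - S%:R) / D%:R + l%:R)
     else 0).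
Proof.
move=> D_gt0; case: k => // k _ lt_S_kD.
have D_neq0 : D%:R != 0 :> rat by rewrite pnatr_eq0 -lt0n.
rewrite ps_coefXnM; case: leqP => [le_Sn | lt_nS].
  rewrite ps_geom_exp_coef // eq_sym eqn_mod_dvd //.
  have [/dvdnP [q nS_qD] | _] := boolP (D %| n - S)%N; last by rewrite mul0r mulr0.
  under eq_bigr do rewrite -natrB // nS_qD natrM mulfK // -natrD.
  rewrite nS_qD mulnK // -natr_prod -bin_fact_rising natrM mul1r mulrCA.
  by rewrite mulVf ?mulr1 ?fact_neq0.
(* For S > n the factor of index l = (S - n) / D vanishes; S < k.+1 * D puts l in range. *)
case: ifP => [|_]; last by rewrite mulr0.
rewrite eqn_mod_dvd ?(ltnW lt_nS) // => /dvdnP [q Sn_qD].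
have q_gt0 : (0 < q)%N by rewrite -(ltn_pmul2r D_gt0) -Sn_qD subn_gt0.
have lt_qk : (q < k.+1)%N.
  by rewrite -(ltn_pmul2r D_gt0) -Sn_qD (leq_ltn_trans (leq_subr _ _)).
rewrite (_ : \prod_(_ <= _ < _) _ = 0) ?mulr0 //; apply/eqP; rewrite prodf_seq_eq0.
apply/hasP; exists q; first by rewrite mem_index_iota q_gt0.
by rewrite -opprB -natrB ?(ltnW lt_nS) // Sn_qD natrM mulNr mulfK // addNr.
Qed.

Definition admissible (d x : nat) : bool := (x %% d == 0)%N || (x %% d == 1)%N.

Lemma admissibleE d y : (1 < d)%N ->
  admissible d y = ((d %| y) + ((0 < y) && (d %| y.-1)))%N :> nat.
Proof.
move=> d_gt1; rewrite /admissible; case: y => [|y]; first by rewrite mod0n dvdn0.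
rewrite modnS /=; case: ifP => [dvd_dSy | _]; last by rewrite eqSS.
suff -> : (d %| y)%N = false by [].
apply: contraTF dvd_dSy => dvd_dy.
by rewrite -addn1 dvdn_addr // dvdn1 neq_ltn d_gt1 orbT.
Qed.

Lemma one_add_Xn_geom_coef a d k : (0 < a)%N -> (1 < d)%N ->
  ((1 + psXn a) * ps_geom (d * a)) k = ((a %| k)%N && admissible d (k %/ a))%:R.
Proof.
move=> a_gt0 d_gt1; rewrite mulrDl mul1r ps_coefD ps_coefXnM /ps_geom.
have [/dvdnP [y ->] | ndvd_ak] := boolP (a %| k)%N; last first.
  have dvd_a m : (d * a %| m)%N -> (a %| m)%N by apply/dvdn_trans/dvdn_mull.
  rewrite (contraNF (dvd_a k)) //; case: leqP => // le_ak.
  rewrite (contraNF (dvd_a _)) ?addr0 //.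
  by rewrite -(dvdn_addl _ (dvdnn a)) subnK.
rewrite mulnK // admissibleE // natrD dvdn_pmul2r //.
case: y => [|y]; first by rewrite mul0n leqNgt a_gt0.
by rewrite leq_pmull // mulSn addKn dvdn_pmul2r.
Qed.

Definition part_poly (n a d : nat) : ps :=
  \sum_(x < n.+1 | admissible d x) psXn (a * x).

Lemma part_poly_agree n a d : (0 < a)%N -> (1 < d)%N ->
  ps_agree n (part_poly n a d) ((1 + psXn a) * ps_geom (d * a)).
Proof.
move=> a_gt0 d_gt1 k le_kn.
rewrite /part_poly one_add_Xn_geom_coef // ps_coef_sum big_mkcond /=.
have [/dvdnP [y k_ya] | ndvd_ak] := boolP (a %| k)%N; last first.
  rewrite big1 // => x _; rewrite /psXn; case: admissible => //.
  suff -> : (k == a * x)%N = false by [].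
  by apply: contraNF ndvd_ak => /eqP ->; apply: dvdn_mulr.
subst k; have lt_yn : (y < n.+1)%N by rewrite ltnS (leq_trans _ le_kn) // leq_pmulr.
rewrite mulnK // (bigD1 (Ordinal lt_yn)) //= big1 ?addr0.
  by rewrite /psXn mulnC eqxx; case: admissible.
move=> x /negbTE ne_xy; rewrite /psXn mulnC eqn_pmul2l //.
rewrite (_ : (y == x)%N = false) ?if_same //.
by apply: contraFF ne_xy => /eqP eq_yx; apply/eqP/val_inj.
Qed.

Lemma pad_coef r (a : 'I_r -> nat) d n :
  (pad a d n)%:R = (\prod_(i < r) part_poly n (a i) d) n.
Proof.
rewrite bigA_distr_big_dep ps_coef_sum /pad -sum1_card natr_sum big_mkcond.
rewrite [RHS]big_mkcond; apply: eq_bigr => x _.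
rewrite in_set -(morph_sumn psXnD psXn0) /psXn eq_sym.
have -> : (x \in family (fun=> fun j : 'I_n.+1 => admissible d j)) =
          [forall i, admissible d (x i)] by apply/familyP/forallP.
by case: (_ == _); case: forallP.
Qed.

Lemma weight_lt r d (a : 'I_r -> nat) eps (j : {ffun 'I_r -> 'I_(Dlcm a d)}) :
  (0 < r)%N -> (1 < d)%N -> (forall i, 0 < a i)%N ->
  [forall i, j i < Dlcm a d %/ (d * a i)]%N -> (weight eps j < r * Dlcm a d)%N.
Proof.
move=> r_gt0 d_gt1 a_gt0 /forallP j_lt.
have term_lt i : (a i * (d * j i + eps i) < Dlcm a d)%N.
  rewrite -[X in (_ < X)%N](divnK (dvdn_Dlcm a d i)).
  by have := j_lt i; have := a_gt0 i; case: (eps i) => /=; nia.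
have D_gt0 : (0 < Dlcm a d)%N := leq_ltn_trans (leq0n _) (term_lt (Ordinal r_gt0)).
apply: (@leq_ltn_trans (\sum_(i < r) (Dlcm a d).-1)).
  by apply: leq_sum => i _; rewrite -ltnS prednK.
by rewrite sum_nat_const card_ord ltn_pmul2l // ltn_predL.
Qed.

(** * The counting function and its polynomial part *)

Section Formulas.
Variables (r d : nat) (a : 'I_r -> nat).
Hypotheses (r_gt0 : (0 < r)%N) (d_gt1 : (1 < d)%N) (a_gt0 : forall i, (0 < a i)%N).
Let D := Dlcm a d.

Lemma Dlcm_gt0 : (0 < D)%N.
Proof.
apply: (big_ind (fun m => 0 < m)%N) => // [m p | i _]; first by rewrite lcmn_gt0 => ->.
by rewrite muln_gt0 a_gt0 ltnW.
Qed.

Lemma pad_series :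
  \prod_(i < r) ((1 + psXn (a i)) * ps_geom (d * a i)) =
  (\sum_(eps : {ffun 'I_r -> bool})
    \sum_(j : {ffun 'I_r -> 'I_D} | [forall i, j i < D %/ (d * a i)]%N)
      psXn (weight eps j)) * ps_geom D ^+ r.
Proof.
have da_gt0 i : (0 < d * a i)%N by rewrite muln_gt0 a_gt0 ltnW.
rewrite big_split /=.
apply: (@mulr_cross_inv _ _ _ ((1 - psXn D) ^+ r) (\prod_(i < r) (1 - psXn (d * a i)))).
- by rewrite -exprMn (mulrC (1 - psXn D)) ps_geomK ?expr1n ?Dlcm_gt0.
- transitivity (\prod_(i < r) ((1 - psXn (d * a i)) * ps_geom (d * a i))).
    by rewrite big_split.
  by rewrite big1 // => i _; rewrite (mulrC (1 - _)) ps_geomK.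
have := prod_geometric_factor psXnD psXn0 d a.
by rewrite big_split prodr_const card_ord.
Qed.

Lemma pad_formula n :
  (pad a d n)%:R =
  (r.-1`!)%:R^-1 *
  \sum_(eps : {ffun 'I_r -> bool})
    \sum_(j : {ffun 'I_r -> 'I_D} |
            [forall i, (j i < D %/ (d * a i))%N] && (weight eps j == n %[mod D]))
      \prod_(1 <= l < r) ((n%:R - (weight eps j)%:R) / D%:R + l%:R) :> rat.
Proof.
rewrite pad_coef (ps_agree_prod _ (fun i => part_poly_agree (n := n) (a_gt0 i) d_gt1)) //.
rewrite pad_series mulr_suml ps_coef_sum mulr_sumr; apply: eq_bigr => eps _.
rewrite mulr_suml ps_coef_sum big_mkcondr mulr_sumr; apply: eq_bigr => j j_lt.
by rewrite psXn_geom_exp_coef ?Dlcm_gt0 ?weight_lt.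
Qed.

Lemma polypart_series :
  \prod_(i < r) ps_num (a i)%:R * ps_inv (\prod_(i < r) ps_den (d * a i)%:R) =
  (\sum_(eps : {ffun 'I_r -> bool})
    \sum_(j : {ffun 'I_r -> 'I_D} | [forall i, j i < D %/ (d * a i)]%N)
      ps_exp (- (weight eps j)%:R)) * ps_inv (ps_den D%:R) ^+ r.
Proof.
apply: (@mulr_cross_inv _ _ _ (ps_den D%:R ^+ r) (\prod_(i < r) ps_den (d * a i)%:R)).
- by rewrite -exprMn ps_mulV ?expr1n // ps_den0 pnatr_eq0 -lt0n Dlcm_gt0.
- apply: ps_mulV; rewrite ps_coef0_prod prodf_seq_neq0; apply/allP => i _.
  by rewrite ps_den0 pnatr_eq0 -lt0n muln_gt0 a_gt0 ltnW.
have := prod_geometric_factor ps_expN_morph ps_expN0 d a.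
rewrite /= (eq_bigr _ (fun i _ => esym (psX_mul_den _))) -psX_mul_den.
rewrite !big_split !prodr_const !card_ord /= => series_eq.
apply: (lregX (n := r) (@psXn_lreg 1)).
by rewrite mulrCA [RHS]mulrA; exact: series_eq.
Qed.

Lemma polypart_formula c :
  polypart a d c =
  (D%:R * r.-1`!%:R)^-1 *
  \sum_(eps : {ffun 'I_r -> bool})
    \sum_(j : {ffun 'I_r -> 'I_D} | [forall i, j i < D %/ (d * a i)]%N)
      \prod_(1 <= l < r) ((c - (weight eps j)%:R) / D%:R + l%:R).
Proof.
have D_neq0 : D%:R != 0 :> rat by rewrite pnatr_eq0 -lt0n Dlcm_gt0.
rewrite (_ : polypart a d c = (ps_exp c * (\prod_(i < r) ps_num (a i)%:R *
  ps_inv (\prod_(i < r) ps_den (d * a i)%:R))) r.-1) //.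
rewrite polypart_series mulr_suml mulr_sumr ps_coef_sum mulr_sumr.
apply: eq_bigr => eps _; rewrite mulr_suml mulr_sumr ps_coef_sum mulr_sumr.
apply: eq_bigr => j _; rewrite mulrA ps_expD.
by have := exp_mul_inv_den_coef (c - (weight eps j)%:R) D_neq0 r.-1; rewrite prednK.
Qed.

End Formulas.

Theorem theorem2p3 (r d : nat) (a : 'I_r -> nat)
  (hr : (2 <= r)%N) (hd : (2 <= d)%N) (ha : forall i, (0 < a i)%N) :
  let D := Dlcm a d in
  (forall n : nat,
    (pad a d n)%:R =
      (r.-1`!)%:R^-1 *
      \sum_(eps : {ffun 'I_r -> bool})
        \sum_(j : {ffun 'I_r -> 'I_D} |
                [forall i, (j i < D %/ (d * a i))%N] &&
                ((\sum_(i < r) a i * (d * j i + eps i))%N == n %[mod D]))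
          \prod_(1 <= l < r)
            (((n%:R - (\sum_(i < r) a i * (d * j i + eps i))%N%:R) / D%:R)
               + l%:R : rat))
  /\
  (forall n : rat,
    polypart a d n =
      (D%:R * (r.-1`!)%:R)^-1 *
      \sum_(eps : {ffun 'I_r -> bool})
        \sum_(j : {ffun 'I_r -> 'I_D} | [forall i, (j i < D %/ (d * a i))%N])
          \prod_(1 <= l < r)
            (((n - (\sum_(i < r) a i * (d * j i + eps i))%N%:R) / D%:R)
               + l%:R)).
Proof.
have r_gt0 : (0 < r)%N by apply: ltnW.
by split => n; [apply: pad_formula | apply: polypart_formula].
Qed.
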